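(* Consider the CTMDP primitives $\{S,A,q,c\}$ described in the context, assume $\bar c(x):=\sup_{a\in A}c(x,a)<\infty$ for all $x\in S$, and let $w$ be a $[1,\infty)$-valued Borel function on $S$ with $w(x)\ge1+\bar c(x)+\bar q_x$ for all $x\in S$. Define the stochastic kernel $\tilde p(dy|x,a):=\frac{q(dy|x,a)}{w(x)}+\delta_{\{x\}}(dy)$ on $\mathcal B(S)$ given $(x,a)\in S\times A$. Then: (a) A $[1,\infty]$-valued lower semianalytic function $V$ on $S$ satisfies $$0=\inf_{a\in A}\left\{c(x,a)V(x)+\int_S q(dy|x,a)V(y)\right\}\qquad(\ast)$$ for each $x\in S$ with $V(x)<\infty$ if and only if $$V(x)=\inf_{a\in A}\left\{\frac{w(x)}{w(x)-c(x,a)}\int_S\tilde p(dy|x,a)V(y)\right\},\quad\forall x\in S.$$ (b) Let $V$ be a $[1,\infty]$-valued lower semianalytic function on $S$ satisfying $(\ast)$ for each $x\in S$ with $V(x)<\infty$. A deterministic stationary policy (measurable map) $\varphi:S\to A$ satisfies $$0=\inf_{a\in A}\left\{c(x,a)V(x)+\int_S q(dy|x,a)V(y)\right\}=c(x,\varphi(x))V(x)+\int_S q(dy|x,\varphi(x))V(y)$$ for each $x\in S$ with $V(x)<\infty$ if and only if $$\inf_{a\in A}\left\{\frac{w(x)}{w(x)-c(x,a)}\int_S\tilde p(dy|x,a)V(y)\right\}=\frac{w(x)}{w(x)-c(x,\varphi(x))}\int_S\tilde p(dy|x,\varphi(x))V(y),\quad\forall x\in S.$$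
   Context: $S$, $A$ are nonempty Borel spaces. The transition rate $q(dy|x,a)$ is a signed kernel on $\mathcal B(S)$ given $(x,a)\in S\times A$ with $q(\Gamma\setminus\{x\}|x,a)\ge0$ for all $\Gamma\in\mathcal B(S)$, $q(S|x,a)=0$, and $\bar q_x:=\sup_{a\in A}q_x(a)<\infty$, where $q_x(a):=-q(\{x\}|x,a)$. The cost rate $c:S\times A\to[0,\infty)$ is measurable. Conventions: $0/0=0$, $0\cdot\infty=0$, $1/0=+\infty$, $\infty-\infty=\infty$. *)

From HB Require Import structures.
From mathcomp Require Import all_boot all_order all_algebra.
From mathcomp Require Import all_classical all_reals all_analysis.
From mathcomp Require Import measurable_realfun lebesgue_integral charge.
Set Implicit Arguments. Unset Strict Implicit. Unset Printing Implicit Defensive.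
Import Order.TTheory GRing.Theory Num.Theory.
Import numFieldNormedType.Exports.
Local Open Scope classical_set_scope.
Local Open Scope ring_scope.
Local Open Scope ereal_scope.

(** Baire space N^N with its Borel sigma-algebra, generated by the cylinders
    [set g | g n = k]. *)
Definition baire_cyl : set (set (nat -> nat)) :=
  fun C => exists n k : nat, C = [set g : nat -> nat | g n = k].
Definition baire_borel : set (set (nat -> nat)) := <<s baire_cyl >>.

(** Borel space (= standard Borel space): Borel-isomorphic to a Borel subset
    of the Baire space. *)
Definition borel_space d (T : measurableType d) : Prop :=
  exists (B : set (nat -> nat)) (f : T -> nat -> nat) (g : (nat -> nat) -> T),
    baire_borel B /\ (forall x, B (f x)) /\ (forall x, g (f x) = x) /\
    (forall y, B y -> f (g y) = y) /\
    (forall C, baire_borel C -> measurable (f @^-1` C)) /\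
    (forall D, measurable D -> baire_borel (f @` D)).

Definition analytic d (T : measurableType d) (E : set T) : Prop :=
  E = set0 \/ exists f : (nat -> nat) -> T,
    (forall D, measurable D -> baire_borel (f @^-1` D)) /\ E = range f.

Definition lower_semianalytic d (T : measurableType d) (R : realType)
  (V : T -> \bar R) : Prop :=
  forall r : R, analytic [set x | V x < r%:E].

(** Integral of f against the (nonnegative) measure whose values on measurable
    sets are given by the set function m (0 if there is no such measure). *)
Definition int_wrt d (T : measurableType d) (R : realType)
  (m : set T -> \bar R) (f : T -> \bar R) : \bar R :=
  match pselect (exists mu : {measure set T -> \bar R},
                   forall G, measurable G -> mu G = m G) with
  | left H => \int[projT1 (cid H)]_y f y
  | right _ => 0
  end.

Section CTMDP.
Context {d1 d2 : measure_display} {S : measurableType d1}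
  {A : measurableType d2} {R : realType}.
Variable q : S -> A -> {charge set S -> \bar R}.

Definition qx (x : S) (a : A) : \bar R := - q x a [set x].

(** int_S q(dy|x,a) V(y) := int_{S\{x}} V(y) q(dy|x,a) - q_x(a) V(x),
    with the convention oo - oo = oo (dual addition). *)
Definition qint (x : S) (a : A) (V : S -> \bar R) : \bar R :=
  dual_adde (int_wrt (fun G => q x a (G `\ x)) V) (- (qx x a * V x)).

Definition ptint (w : S -> R) (x : S) (a : A) (V : S -> \bar R) : \bar R :=
  int_wrt (fun G => q x a G * ((w x)^-1)%:E + \d_x G) V.
End CTMDP.

From HB Require Import structures.
From mathcomp Require Import all_boot all_order all_algebra.
From mathcomp Require Import all_classical all_reals all_analysis.
From mathcomp Require Import measurable_realfun lebesgue_integral charge.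
From mathcomp Require Import ring lra.

(* The uniformized kernel is the mixture
     p~(.|x,a) = q(. \ {x}|x,a) / w(x) + (1 - q_x(a)/w(x)) delta_x,
   so for V >= 1 with V(x) finite
     w/(w-c) int V dp~ = V(x) + (w-c)^-1 (c V(x) + int V dq),
   while both sides of the uniformized equation are +oo when V(x) = +oo.
   The weights (w-c)^-1 lie in [1/w, 1], hence inf_a (V(x) + K_a F_a) = V(x)
   exactly when inf_a F_a = 0, and an action attains one infimum iff it
   attains the other.
   V is only lower semianalytic, so its integrals are suprema over simple
   minorants and their additivity over the mixture with a Dirac mass is
   proved by hand; this needs the points of a Borel space to be measurable. *)

Set Implicit Arguments.
Unset Strict Implicit.
Unset Printing Implicit Defensive.
Import Order.TTheory GRing.Theory Num.Theory.
Import numFieldNormedType.Exports.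
Import HBNNSimple.
Local Open Scope classical_set_scope.
Local Open Scope ring_scope.
Local Open Scope ereal_scope.

Lemma baire_borel_set1 (h : nat -> nat) : baire_borel [set h].
Proof.
have -> : [set h] = \bigcap_n [set g : nat -> nat | g n = h n].
  by apply/seteqP; split => [g -> //|g gh]; apply/funext => n; exact: gh.
apply: (@bigcapT_measurable _ (g_sigma_algebraType baire_cyl)) => n.
by apply: sub_gen_smallest; exists n, (h n).
Qed.

Lemma borel_space_measurable_set1 d (T : measurableType d) (x : T) :
  borel_space T -> measurable [set x].
Proof.
case=> B [f [g [_ [_ [gf [_ [mf _]]]]]]].
have -> : [set x] = f @^-1` [set f x].
  by apply/seteqP; split => [y -> //|y /= fyx]; rewrite -(gf y) fyx gf.
exact: mf (baire_borel_set1 _).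
Qed.

Section integral_mscale_add_dirac.
Context d (T : measurableType d) (R : realType).
Variables (mu : {measure set T -> \bar R}) (x0 : T) (k m : {nonneg R}).
Hypotheses (mx0 : measurable [set x0]) (k_gt0 : (0 < k%:num)%R)
  (m_gt0 : (0 < m%:num)%R).

Local Notation mix := (measure_add (mscale k mu) (mscale m \d_x0)).

Lemma sintegral_mscale_add_dirac (h : {nnsfun T >-> R}) :
  sintegral mix h = (k%:num)%:E * sintegral mu h + (m%:num)%:E * (h x0)%:E.
Proof.
have sintE (nu : {measure set T -> \bar R}) : sintegral nu h = \int[nu]_y (h y)%:E.
  by rewrite integral_nnsfun// patch_setT.
have mh : measurable_fun setT (fun y => (h y)%:E) by exact/measurable_EFinP.
have h0 y : setT y -> 0 <= (h y)%:E by move=> _; rewrite lee_fin.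
rewrite !sintE (ge0_integral_measure_add _ _ measurableT h0 mh).
rewrite !(ge0_integral_mscale _ measurableT _ mh h0).
by rewrite (integral_dirac x0 measurableT mh) diracE in_setT mul1e.
Qed.

Variable f : T -> \bar R.
Hypothesis f_ge0 : forall y, 0 <= f y.

Lemma integral_mscale_add_dirac_le :
  \int[mix]_y f y <= (k%:num)%:E * \int[mu]_y f y + (m%:num)%:E * f x0.
Proof.
rewrite [\int[mix]_ _ _]ge0_integralTE// [\int[mu]_ _ _]ge0_integralTE//.
apply: ge_ereal_sup => _ [h /= hf <-]; rewrite sintegral_mscale_add_dirac.
apply: leeD; apply: lee_wpmul2l => //.
by apply: ereal_sup_ubound; exists h.
Qed.

Lemma sintegral_add_dirac_le_integral (h : {nnsfun T >-> R}) (t : R) :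
  (forall y, (h y)%:E <= f y) -> (0 <= t)%R -> t%:E <= f x0 ->
  (k%:num)%:E * sintegral mu h + (m%:num)%:E * t%:E <= \int[mix]_y f y.
Proof.
move=> hf t0 tf.
pose g := max_nnsfun h (scale_nnsfun (indic_nnsfun R mx0) t0).
have gE y : g y = Order.max (h y) (t * \1_[set x0] y)%R by [].
have gf y : (g y)%:E <= f y.
  rewrite gE EFin_max ge_max hf /= indicE.
  have [->|/eqP yx0] := eqVneq y x0; first by rewrite mem_set// mulr1.
  by rewrite memNset// mulr0.
apply: le_trans (_ : sintegral mix g <= _); last first.
  by rewrite ge0_integralTE//; apply: ereal_sup_ubound; exists g.
rewrite sintegral_mscale_add_dirac; apply: leeD; apply: lee_wpmul2l => //.
  by apply: le_sintegral => y; rewrite gE le_max lexx.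
by rewrite lee_fin gE indicE mem_set// mulr1 le_max lexx orbT.
Qed.

Lemma integral_mscale_add_dirac_ge :
  (k%:num)%:E * \int[mu]_y f y + (m%:num)%:E * f x0 <= \int[mix]_y f y.
Proof.
case fx0 : (f x0) => [v| |]; last by have := f_ge0 x0; rewrite fx0.
- have v0 : (0 <= v)%R by rewrite -lee_fin -fx0.
  rewrite -leeBrDr// ge0_integralTE// -ereal_sup_pZl//.
  apply: ge_ereal_sup => _ [_ [h hf <-] <-].
  rewrite leeBrDr//; apply: sintegral_add_dirac_le_integral => //.
  by rewrite fx0.
- suff -> : \int[mix]_y f y = +oo by rewrite leey.
  apply: eq_infty => r; pose t := Num.max 0%R (r / m%:num)%R.
  have t0 : (0 <= t)%R by rewrite le_max lexx.
  apply: le_trans (@sintegral_add_dirac_le_integral nnsfun0 t _ t0 _).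
  - rewrite sintegral0 mule0 add0e -EFinM lee_fin -ler_pdivrMl//.
    by rewrite mulrC le_max lexx orbT.
  - by move=> y; rewrite f_ge0.
  - by rewrite fx0 leey.
Qed.

Lemma integral_mscale_add_dirac :
  \int[mix]_y f y = (k%:num)%:E * \int[mu]_y f y + (m%:num)%:E * f x0.
Proof.
by apply/eqP; rewrite eq_le integral_mscale_add_dirac_le integral_mscale_add_dirac_ge.
Qed.

End integral_mscale_add_dirac.

Lemma int_wrtE d (T : measurableType d) (R : realType)
  (mu : {measure set T -> \bar R}) (m : set T -> \bar R) (f : T -> \bar R) :
  (forall G, measurable G -> mu G = m G) -> int_wrt m f = \int[mu]_y f y.
Proof.
move=> muE; rewrite /int_wrt; case: pselect => [ex|[]]; last by exists mu.
apply: eq_measure_integral => G mG _.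
by case: (cid ex) => /= nu ->; rewrite ?muE.
Qed.

Section uniformization.
Context d1 d2 (S : measurableType d1) (A : measurableType d2) (R : realType).
Variables (q : S -> A -> {charge set S -> \bar R}) (x : S) (a : A).
Hypotheses (mx : measurable [set x])
  (q_off : forall G, measurable G -> 0 <= q x a (G `\ x))
  (q_cons : q x a [set: S] = 0).

Lemma qx_ge0 : 0 <= qx q x a.
Proof. by have := q_off measurableT; rewrite chargeD// q_cons setTI sub0e. Qed.

Lemma off_diagonal_ge0 G : 0 <= crestr0 (q x a) (measurableC mx) G.
Proof.
rewrite /crestr0; case: ifPn => [/set_mem mG|_] //.
by rewrite /crestr -setDE q_off.
Qed.

Let qxE : qx q x a = (fine (qx q x a))%:E.
Proof. by rewrite fineK// fin_numN fin_num_measure. Qed.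

Local Notation mu_off := (measure_of_charge _ off_diagonal_ge0).

Lemma int_wrt_off_diagonalE (V : S -> \bar R) :
  int_wrt (fun G => q x a (G `\ x)) V = \int[mu_off]_y V y.
Proof.
apply: int_wrtE => G mG; change (crestr0 (q x a) (measurableC mx) G = q x a (G `\ x)).
by rewrite /crestr0 mem_set// /crestr -setDE.
Qed.

Lemma ptintE (w : S -> R) (V : S -> \bar R) :
  qx q x a < (w x)%:E -> (forall y, 0 <= V y) ->
  ptint q w x a V
  = ((w x)^-1)%:E * \int[mu_off]_y V y + (1 - fine (qx q x a) / w x)%:E * V x.
Proof.
move=> qx_lt_w V_ge0; set r := fine (qx q x a); set wx := w x in qx_lt_w *.
have qx_r : qx q x a = r%:E := qxE.
have r_ge0 : (0 <= r)%R by rewrite -lee_fin -qx_r qx_ge0.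
have r_lt_w : (r < wx)%R by rewrite -lte_fin -qx_r.
have w_gt0 : (0 < wx)%R by apply: le_lt_trans r_lt_w.
have k_gt0 : (0 < wx^-1)%R by rewrite invr_gt0.
have m_gt0 : (0 < 1 - r / wx)%R by rewrite subr_gt0 ltr_pdivrMr// mul1r.
pose mix := measure_add (mscale (NngNum (ltW k_gt0)) mu_off)
                        (mscale (NngNum (ltW m_gt0)) \d_x).
suff mixE G : measurable G -> mix G = q x a G * (wx^-1)%:E + \d_x G.
  by rewrite /ptint (@int_wrtE _ _ _ mix _ _ mixE) integral_mscale_add_dirac.
move=> mG; rewrite /mix measure_addE.
change ((wx^-1)%:E * crestr0 (q x a) (measurableC mx) G + (1 - r / wx)%:E * \d_x G
  = q x a G * (wx^-1)%:E + \d_x G).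
rewrite /crestr0 mem_set// /crestr -setDE.
have qGx : q x a (G `\ x) \is a fin_num by apply/fin_num_measure/measurableD.
have qG : q x a G \is a fin_num by exact: fin_num_measure.
move: (chargeD (q x a) mG mx); rewrite -(fineK qGx) -(fineK qG) diracE.
have [xG|xGN] := boolP (x \in G).
  have -> : G `&` [set x] = [set x].
    by apply/seteqP; split => y /=; [case|move=> ->; split => //; exact/set_mem].
  move: qx_r; rewrite /qx => /(congr1 oppe); rewrite oppeK => ->.
  move=> /(congr1 fine) /= ->; rewrite -!EFinM -!EFinD; congr EFin; field.
  by rewrite gt_eqF.
have -> : G `&` [set x] = set0.
  by apply/seteqP; split => y //= [Gy yx]; move: xGN; rewrite -yx mem_set.
rewrite charge0 sube0 => /(congr1 fine) /= ->.
by rewrite -!EFinM -!EFinD; congr EFin; ring.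
Qed.

Variables (c : R) (w : S -> R) (V : S -> \bar R).
Hypotheses (c_ge0 : (0 <= c)%R) (w_ge : 1 + c%:E + qx q x a <= (w x)%:E)
  (V_ge1 : forall y, 1 <= V y).

Local Notation U := ((w x / (w x - c))%:E * ptint q w x a V).
Local Notation B := (c%:E * V x + qint q x a V).

Let V_ge0 y : 0 <= V y. Proof. exact: le_trans (V_ge1 y). Qed.

Let w_geR : (1 + c + fine (qx q x a) <= w x)%R.
Proof. by rewrite -lee_fin !EFinD -qxE. Qed.

Let qx_lt_w : qx q x a < (w x)%:E.
Proof. by rewrite qxE lte_fin; move: w_geR c_ge0; lra. Qed.

Let r_ge0 : (0 <= fine (qx q x a))%R. Proof. by rewrite -lee_fin -qxE qx_ge0. Qed.
Let wc_gt0 : (0 < w x - c)%R. Proof. by move: w_geR r_ge0; lra. Qed.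
Let w_gt0 : (0 < w x)%R. Proof. by move: w_geR r_ge0 c_ge0; lra. Qed.
Let m_gt0 : (0 < 1 - fine (qx q x a) / w x)%R.
Proof. by rewrite subr_gt0 ltr_pdivrMr// mul1r; move: w_geR c_ge0; lra. Qed.
Let I_ge0 : 0 <= \int[mu_off]_y V y. Proof. exact: integral_ge0. Qed.

Lemma scaled_ptint_pinfty : V x = +oo -> U = +oo.
Proof.
move=> Vx; rewrite ptintE// Vx gt0_muley ?lte_fin//.
rewrite addey ?gt0_muley ?lte_fin ?divr_gt0//.
by rewrite gt_eqF// (lt_le_trans _ (mule_ge0 _ I_ge0)) ?lee_fin ?invr_ge0 ?ltW.
Qed.

Lemma qint_bellman_gtNy : V x \is a fin_num -> -oo < B.
Proof.
move=> /fineK Vx; rewrite /qint int_wrt_off_diagonalE -Vx qxE -!EFinM -EFinN.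
by case: (\int[mu_off]_y V y) I_ge0 => [i| |] //= _; rewrite -EFinD ltNyr.
Qed.

Lemma scaled_ptintE : V x \is a fin_num -> U = V x + ((w x - c)^-1)%:E * B.
Proof.
move=> /fineK Vx; rewrite /qint int_wrt_off_diagonalE ptintE// -Vx qxE -!EFinM -EFinN.
case: (\int[mu_off]_y V y) I_ge0 => [i| |] // _.
  rewrite /dual_adde /= -[_ * i%:E]EFinM -EFinD -EFinM -EFinD.
  congr EFin; field.
  by rewrite !gt_eqF.
by rewrite /= !gt0_muley ?lte_fin ?invr_gt0 ?divr_gt0.
Qed.

End uniformization.

Lemma ereal_inf_eq0_iff_fixpoint {I : Type} {R : realType} (v : R) {M : R}
  {F : I -> \bar R} {K : I -> R} :
  (0 < M)%R -> (forall i, M <= K i <= 1)%R -> (forall i, -oo < F i) ->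
  0 = ereal_inf [set F i | i in [set: I]] <->
  v%:E = ereal_inf [set v%:E + (K i)%:E * F i | i in [set: I]].
Proof.
move=> M_gt0 K_bounds F_gtNy.
have K_gt0 i : (0 < K i)%R by case/andP: (K_bounds i) => /(lt_le_trans M_gt0).
split => [inf0|infv].
  have F_ge0 i : 0 <= F i by rewrite inf0; apply: ereal_inf_lbound; exists i.
  apply/eqP; rewrite eq_le; apply/andP; split.
    apply/ereal_infP => _ [i _ <-]; apply: leeDl.
    by rewrite mule_ge0// lee_fin ltW.
  apply/lee_addgt0Pr => e e_gt0.
  have : ereal_inf [set F i | i in [set: I]] < e%:E by rewrite -inf0 lte_fin.
  case/ereal_inf_lt => _ [i _ <-] Fi_lt_e.
  apply: le_trans (ereal_inf_lbound _) _; first by exists i.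
  rewrite leeD2lE//; apply: le_trans (ltW Fi_lt_e).
  rewrite -[leRHS]mul1e; apply: lee_wpmul2r => //.
  by rewrite lee_fin; case/andP: (K_bounds i).
have F_ge0 i : 0 <= F i.
  have : v%:E <= v%:E + (K i)%:E * F i.
    by rewrite {1}infv; apply: ereal_inf_lbound; exists i.
  by rewrite -[X in X <= _]adde0 leeD2lE// (pmule_rge0 _ _) ?lte_fin.
apply/eqP; rewrite eq_le; apply/andP; split.
  by apply/ereal_infP => _ [i _ <-]; exact: F_ge0.
apply/lee_addgt0Pr => e e_gt0; rewrite add0e.
have : ereal_inf [set v%:E + (K i)%:E * F i | i in [set: I]] < (v + M * e)%:E.
  by rewrite -infv lte_fin ltrDl mulr_gt0.
case/ereal_inf_lt => _ [i _ <-]; rewrite EFinD lteD2lE// => KF_lt.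
apply: le_trans (ereal_inf_lbound _) _; first by exists i.
move: KF_lt (F_gtNy i) (F_ge0 i); case: (F i) => [f| |] //.
  rewrite -EFinM !lte_fin !lee_fin => KF_lt _ f_ge0.
  by have := K_gt0 i; case/andP: (K_bounds i) => MK _; nra.
by rewrite gt0_muley ?lte_fin// ltNge leey.
Qed.

Section bellman_pointwise.
Context (I : Type) (R : realType).
Variables (w : R) (c : I -> R) (v : \bar R) (B U : I -> \bar R).
Hypotheses (w_ge1 : (1 <= w)%R) (c_ge0 : forall i, (0 <= c i)%R)
  (c_le_w : forall i, (1 + c i <= w)%R)
  (v_gtNy : -oo < v)
  (U_pinfty : v = +oo -> forall i, U i = +oo)
  (B_gtNy : v \is a fin_num -> forall i, -oo < B i)
  (UE : v \is a fin_num -> forall i, U i = v + ((w - c i)^-1)%:E * B i).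

Let weight_bounds i : (w^-1 <= (w - c i)^-1 <= 1)%R.
Proof.
have := c_le_w i; have := c_ge0 i => c0 cw.
by rewrite lef_pV2 ?posrE ?invf_le1 ?subr_gt0; [apply/andP; split|..]; lra.
Qed.

Let w_inv_gt0 : (0 < w^-1)%R. Proof. by rewrite invr_gt0 (lt_le_trans ltr01). Qed.

Lemma bellman_iff_fixpoint :
  (v < +oo -> 0 = ereal_inf [set B i | i in [set: I]]) <->
  v = ereal_inf [set U i | i in [set: I]].
Proof.
move: v_gtNy U_pinfty B_gtNy UE; case: v => [r| |] //= _ Uoo BgtNy Ur.
  rewrite (eq_imagel (fun i _ => Ur isT i)).
  have fixpointP := ereal_inf_eq0_iff_fixpoint r w_inv_gt0 weight_bounds (BgtNy isT).
  by split => [/(_ (ltry r))/fixpointP|/fixpointP].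
split=> // _; apply/esym/ereal_inf_pinfty => _ [i _ <-]; exact: Uoo.
Qed.

Lemma bellman_argmin_iff (i0 : I) :
  (v < +oo -> 0 = ereal_inf [set B i | i in [set: I]]) ->
  (v < +oo -> 0 = ereal_inf [set B i | i in [set: I]] /\
              ereal_inf [set B i | i in [set: I]] = B i0) <->
  ereal_inf [set U i | i in [set: I]] = U i0.
Proof.
have K_gt0 : (0 < (w - c i0)^-1)%R.
  by apply: lt_le_trans w_inv_gt0 _; case/andP: (weight_bounds i0).
move=> inf0; rewrite -(bellman_iff_fixpoint.1 inf0).
move: v_gtNy U_pinfty B_gtNy UE inf0; case: v => [r| |] //= _ Uoo BgtNy Ur; last first.
  by move=> _; split => // _; rewrite Uoo.
move=> /(_ (ltry r)) inf0; rewrite Ur// -inf0.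
split => [/(_ (ltry r)) [_ <-]|]; first by rewrite mule0 adde0.
move=> r_eq; split => //; move: r_eq (BgtNy isT i0).
case: (B i0) => [b| |] //=; last by rewrite gt0_muley ?lte_fin.
rewrite -EFinM -EFinD => -[/eqP].
by rewrite -subr_eq0 opprD addrA subrr sub0r oppr_eq0 mulf_eq0 gt_eqF// => /eqP->.
Qed.

End bellman_pointwise.

Section bellman_at_state.
Context d1 d2 (S : measurableType d1) (A : measurableType d2) (R : realType).
Variables (q : S -> A -> {charge set S -> \bar R}) (x : S) (c : A -> R)
  (w : S -> R) (V : S -> \bar R).
Hypotheses (mx : measurable [set x])
  (q_off : forall a G, measurable G -> 0 <= q x a (G `\ x))
  (q_cons : forall a, q x a [set: S] = 0)
  (c_ge0 : forall a, (0 <= c a)%R) (w_ge1 : (1 <= w x)%R)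
  (w_ge : forall a, 1 + (c a)%:E + qx q x a <= (w x)%:E)
  (V_ge1 : forall y, 1 <= V y).

Let c_le_w a : (1 + c a <= w x)%R.
Proof.
rewrite -lee_fin EFinD; apply: le_trans (w_ge a); apply: leeDl.
exact: qx_ge0 mx (q_off a) (q_cons a).
Qed.

Let V_gtNy : -oo < V x. Proof. exact: lt_le_trans (ltNyr 1%R) (V_ge1 x). Qed.

Let U_pinfty : V x = +oo ->
  forall a, (w x / (w x - c a))%:E * ptint q w x a V = +oo.
Proof.
move=> Vx a.
exact: (scaled_ptint_pinfty mx (q_off a) (q_cons a) (c_ge0 a) (w_ge a) V_ge1 Vx).
Qed.

Let B_gtNy : V x \is a fin_num -> forall a, -oo < (c a)%:E * V x + qint q x a V.
Proof. by move=> Vx a; exact: (qint_bellman_gtNy mx (q_off a) (c a) V_ge1 Vx). Qed.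

Let UE : V x \is a fin_num -> forall a,
  (w x / (w x - c a))%:E * ptint q w x a V
  = V x + ((w x - c a)^-1)%:E * ((c a)%:E * V x + qint q x a V).
Proof.
move=> Vx a.
exact: (scaled_ptintE mx (q_off a) (q_cons a) (c_ge0 a) (w_ge a) V_ge1 Vx).
Qed.

Lemma bellman_iff_uniformized_fixpoint :
  (V x < +oo -> 0 = ereal_inf [set (c a)%:E * V x + qint q x a V | a in [set: A]]) <->
  V x = ereal_inf [set (w x / (w x - c a))%:E * ptint q w x a V | a in [set: A]].
Proof. exact: bellman_iff_fixpoint w_ge1 c_ge0 c_le_w V_gtNy U_pinfty B_gtNy UE. Qed.

Lemma bellman_argmin_iff_uniformized_argmin (a0 : A) :
  (V x < +oo -> 0 = ereal_inf [set (c a)%:E * V x + qint q x a V | a in [set: A]]) ->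
  (V x < +oo ->
     0 = ereal_inf [set (c a)%:E * V x + qint q x a V | a in [set: A]] /\
     ereal_inf [set (c a)%:E * V x + qint q x a V | a in [set: A]]
       = (c a0)%:E * V x + qint q x a0 V) <->
  ereal_inf [set (w x / (w x - c a))%:E * ptint q w x a V | a in [set: A]]
    = (w x / (w x - c a0))%:E * ptint q w x a0 V.
Proof. exact: bellman_argmin_iff w_ge1 c_ge0 c_le_w V_gtNy U_pinfty B_gtNy UE a0. Qed.

End bellman_at_state.

Unset Implicit Arguments.

Theorem lemma5p8 (R : realType) (d1 d2 : measure_display)
  (S : measurableType d1) (A : measurableType d2)
  (S_borel : borel_space S) (A_borel : borel_space A)
  (S_ne : inhabited S) (A_ne : inhabited A)
  (q : S -> A -> {charge set S -> \bar R})
  (q_ker : forall G : set S, measurable G ->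
     measurable_fun [set: S * A] (fun xa : S * A => q xa.1 xa.2 G))
  (q_off : forall x a (G : set S), measurable G -> 0 <= q x a (G `\ x))
  (q_cons : forall x a, q x a [set: S] = 0)
  (q_bdd : forall x, ereal_sup [set qx q x a | a in [set: A]] < +oo)
  (c : S -> A -> R)
  (c_ge0 : forall x a, (0 <= c x a)%R)
  (c_meas : measurable_fun [set: S * A] (fun xa : S * A => c xa.1 xa.2))
  (c_bdd : forall x, ereal_sup [set (c x a)%:E | a in [set: A]] < +oo)
  (w : S -> R)
  (w_meas : measurable_fun [set: S] w)
  (w_ge1 : forall x, (1 <= w x)%R)
  (w_dom : forall x, 1 + ereal_sup [set (c x a)%:E | a in [set: A]]
                       + ereal_sup [set qx q x a | a in [set: A]] <= (w x)%:E) :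
  (* (a) *)
  (forall V : S -> \bar R, (forall x, 1 <= V x) -> lower_semianalytic V ->
     ((forall x, V x < +oo ->
         0 = ereal_inf [set (c x a)%:E * V x + qint q x a V | a in [set: A]])
      <->
      (forall x, V x = ereal_inf [set ((w x) / (w x - c x a))%:E * ptint q w x a V
                                   | a in [set: A]])))
  /\
  (* (b) *)
  (forall V : S -> \bar R, (forall x, 1 <= V x) -> lower_semianalytic V ->
     (forall x, V x < +oo ->
         0 = ereal_inf [set (c x a)%:E * V x + qint q x a V | a in [set: A]]) ->
     forall phi : S -> A, measurable_fun [set: S] phi ->
     ((forall x, V x < +oo ->
         0 = ereal_inf [set (c x a)%:E * V x + qint q x a V | a in [set: A]] /\
         ereal_inf [set (c x a)%:E * V x + qint q x a V | a in [set: A]]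
           = (c x (phi x))%:E * V x + qint q x (phi x) V)
      <->
      (forall x, ereal_inf [set ((w x) / (w x - c x a))%:E * ptint q w x a V
                            | a in [set: A]]
                 = ((w x) / (w x - c x (phi x)))%:E * ptint q w x (phi x) V))).
Proof.
have mx x : measurable [set x] := borel_space_measurable_set1 x S_borel.
have w_ge x a : 1 + (c x a)%:E + qx q x a <= (w x)%:E.
  by apply: le_trans (w_dom x); apply: leeD; [apply: leeD => //|];
    apply: ereal_sup_ubound; exists a.
have fixpointP (V : S -> \bar R) (V_ge1 : forall y, 1 <= V y) x :=
  bellman_iff_uniformized_fixpoint (mx x) (q_off x) (q_cons x) (c_ge0 x)
    (w_ge1 x) (w_ge x) V_ge1.
have argminP (V : S -> \bar R) (V_ge1 : forall y, 1 <= V y) x :=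
  bellman_argmin_iff_uniformized_argmin (mx x) (q_off x) (q_cons x) (c_ge0 x)
    (w_ge1 x) (w_ge x) V_ge1.
split => [V V_ge1 _|V V_ge1 _ inf0 phi _].
  by split => H x; apply/(fixpointP V V_ge1 x)/H.
by split => H x; apply/(argminP V V_ge1 x (phi x) (inf0 x))/H.
Qed.
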